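(* Let $\mathcal{O}$ be an oriented matroid of rank $r$ on $E$, $f\in E$, $I=[e_1,\dots,e_k]$ ($k\le r$) an ordered set of independent elements (possibly $f\in I$), and $\mathcal{O}'=\mathcal{O}\cup p=\mathcal{O}[e_1^+,\dots,e_k^+]$. Let $X,Y$ be conformal cocircuits of $\mathcal{O}'$ with $X_p=Y_p\neq 0$ and $X\circ Y$ an edge of $\mathcal{O}'$, with $Y_f\neq 0$, and suppose the index $i$ of $X$ and the index $j$ of $Y$ with respect to $I$ satisfy $1\le i<j\le k$. Then $\mathrm{Dir}_{(\mathcal{O}',p,f)}(X,Y)=\mathrm{Dir}_{(\mathcal{O}',e_i,f)}(X,Y)=Y_f$.
   Context: Oriented matroid $\mathcal{O}$ of rank $r$ on finite $E$, given by its cocircuits (sign vectors in $\{+,-,0\}^E$). Notation: $z(X)$ zero set, $\operatorname{sep}(X,Y)=\{e:X_e=-Y_e\ne0\}$, $(X\circ Y)_e=X_e$ if $X_e\ne0$, else $Y_e$; conformal means $\operatorname{sep}=\emptyset$. An edge is a covector whose zero set is a flat of rank $r-2$; cocircuits $X\ne\pm Y$ are comodular if $X\circ Y$ is an edge. For comodular $X,Y$ and $e\in\operatorname{sep}(X,Y)$, cocircuit elimination of $e$ between $X$ and $Y$ yields the unique cocircuit $Z$ with $Z_e=0$ and $Z_h=(X\circ Y)_h$ for $h\notin\operatorname{sep}(X,Y)$. For an oriented matroid $\mathcal{Q}$ on ground set $E'$, distinct $a,b\in E'$ and comodular cocircuits $X,Y$ of $\mathcal{Q}$ with $X_a=Y_a\ne0$,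 let $Z$ be obtained by eliminating $a$ between $-X$ and $Y$ and set $\mathrm{Dir}_{(\mathcal{Q},a,b)}(X,Y)=Z_b$; if $X_a\ne0$ and $Y_a=0$ set $\mathrm{Dir}_{(\mathcal{Q},a,b)}(X,Y)=Y_b$, and if $X_a=0$, $Y_a\neq 0$ set it to $-X_b$. The index of a cocircuit $Y$ w.r.t. $I=[e_1,\dots,e_k]$ is the smallest $i$ with $Y_{e_i}\ne0$, or $k+1$ if none. The positive lexicographic extension $\mathcal{O}[e_1^+,\dots,e_k^+]=\mathcal{O}\cup p$ is the single-element extension with localization $\sigma(Y)=Y_{e_i}$ if the index $i$ of $Y$ is $\le k$, and $\sigma(Y)=0$ otherwise. *)

From Stdlib Require Import ClassicalEpsilon.
From HB Require Import structures.
From mathcomp Require Import all_boot.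

Set Implicit Arguments.
Unset Strict Implicit.
Unset Printing Implicit Defensive.

Inductive sgn := Sz | Sp | Sm.

Definition sgn_eqb (a b : sgn) : bool :=
  match a, b with Sz, Sz | Sp, Sp | Sm, Sm => true | _, _ => false end.

Lemma sgn_eqP : Equality.axiom sgn_eqb.
Proof. by case; case; constructor. Qed.

HB.instance Definition _ := hasDecEq.Build sgn sgn_eqP.

Definition sopp (s : sgn) : sgn :=
  match s with Sp => Sm | Sm => Sp | Sz => Sz end.

Section SignVectors.
Variable E : finType.
Local Notation svec := {ffun E -> sgn}.

Definition zerov : svec := [ffun _ => Sz].
Definition oppv (X : svec) : svec := [ffun e => sopp (X e)].
Definition compv (X Y : svec) : svec := [ffun e => if X e != Sz then X e else Y e].
Definition zeroset (X : svec) : {set E} := [set e | X e == Sz].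
Definition supp (X : svec) : {set E} := [set e | X e != Sz].
Definition sep (X Y : svec) : {set E} := [set e | (X e != Sz) && (X e == sopp (Y e))].
Definition conformal (X Y : svec) : Prop := sep X Y = set0.

Variable C : svec -> Prop.   (* the set of cocircuits *)

Definition is_OM : Prop :=
  [/\ ~ C zerov,
      (forall X, C X -> C (oppv X)),
      (forall X Y, C X -> C Y -> supp X \subset supp Y -> X = Y \/ X = oppv Y) &
      (forall X Y e, C X -> C Y -> X <> oppv Y -> e \in sep X Y ->
         exists Z, [/\ C Z, Z e = Sz &
           forall g, Z g != Sz -> Z g = X g \/ Z g = Y g])].

(* underlying matroid: bases = minimal sets meeting every cocircuit support *)
Definition spanning (S : {set E}) : Prop :=
  forall X, C X -> exists2 e, e \in S & X e != Sz.
Definition basis (B : {set E}) : Prop :=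
  spanning B /\ forall B' : {set E}, B' \proper B -> ~ spanning B'.
Definition indep (J : {set E}) : Prop := exists2 B, basis B & J \subset B.
Definition has_rank (A : {set E}) (n : nat) : Prop :=
  (exists J : {set E}, [/\ J \subset A, indep J & #|J| = n]) /\
  (forall J : {set E}, J \subset A -> indep J -> #|J| <= n).

Definition covector (W : svec) : Prop :=
  exists s : seq svec, (forall Z, Z \in s -> C Z) /\ W = foldr compv zerov s.

Definition is_edge (W : svec) : Prop :=
  covector W /\ exists n, has_rank setT n.+2 /\ has_rank (zeroset W) n.

(* cocircuit elimination of e between X and Y (for comodular X, Y) *)
Definition elim_result (X Y : svec) (e : E) (Z : svec) : Prop :=
  [/\ C Z, Z e = Sz & forall h, h \notin sep X Y -> Z h = compv X Y h].
Definition elim (X Y : svec) (e : E) : svec :=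
  epsilon (inhabits zerov) (elim_result X Y e).

Definition Dir (a b : E) (X Y : svec) : sgn :=
  if (X a != Sz) && (Y a == X a) then elim (oppv X) Y a b
  else if (X a != Sz) && (Y a == Sz) then Y b
  else if (X a == Sz) && (Y a != Sz) then sopp (X b)
  else Sz.

(* index of Y w.r.t. I = [e_1,...,e_k] (1-based; k+1 if none) *)
Definition sindex (I : seq E) (Y : svec) : nat :=
  (find (fun e => Y e != Sz) I).+1.

(* localization of the positive lexicographic extension O[e_1^+,...,e_k^+] *)
Definition lex_sigma (I : seq E) (Y : svec) : sgn :=
  if sindex I Y <= size I then nth Sz [seq Y e | e <- I] (sindex I Y).-1 else Sz.

End SignVectors.

Section Extension.
Variable E : finType.

(* new element p is None; Some e are the old elements *)
Definition restr (Z : {ffun option E -> sgn}) : {ffun E -> sgn} :=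
  [ffun e => Z (Some e)].
Definition extv (Y : {ffun E -> sgn}) (s : sgn) : {ffun option E -> sgn} :=
  [ffun o => match o with Some e => Y e | None => s end].

Definition deletion_cocirc (C' : {ffun option E -> sgn} -> Prop)
    (Y : {ffun E -> sgn}) : Prop :=
  [/\ Y <> zerov E, (exists2 Z, C' Z & restr Z = Y) &
      forall Z, C' Z -> restr Z <> zerov E -> ~ (supp (restr Z) \proper supp Y)].

Definition single_ext (C : {ffun E -> sgn} -> Prop)
    (C' : {ffun option E -> sgn} -> Prop) (sigma : {ffun E -> sgn} -> sgn) : Prop :=
  [/\ is_OM C',
      (forall Y, C Y <-> deletion_cocirc C' Y) &
      (forall Y, C Y -> C' (extv Y (sigma Y)))].

End Extension.

(* Let [Z] be the cocircuit obtained by eliminating [p] between [-X] and [Y]. All cocircuits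
   in play vanish on the flat [F = z(X o Y)] of rank [r - 2], and two cocircuits of this
   rank-2 contraction with distinct supports have no common zero outside the closure of [F].
   This makes the elimination well defined and shows that [Z] agrees with [-X] on
   [e_1, ..., e_i], so that the localization of [Z] is [-X_{e_i} = -X_p].
   If [X_f = 0] then [Z_f = Y_f] directly. Otherwise [Z_f <> 0]: [Z \ p] is not a cocircuit
   of [O] (its lexicographic extension would strictly contain [Z]), so a smaller cocircuit of
   [O'] vanishes on [F], and at [f] if [Z_f = 0], which would force [X_f = 0]. And [Z_f <> -Y_f]:
   else eliminating [f] between [Y] and [Z] gives a cocircuit [V] of index [i] with
   [V_p = Y_p = X_p], while the lexicographic rule gives [V_p = V_{e_i} = -X_{e_i} = -X_p].
   The claim for [e_i] is immediate since [Y_{e_i} = 0]. *)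

From mathcomp Require Import all_boot.
From Stdlib Require Import ClassicalEpsilon Classical.

Set Implicit Arguments.
Unset Strict Implicit.
Unset Printing Implicit Defensive.

Section SignVectors.
Variable T : finType.
Implicit Types (X Y Z A B : {ffun T -> sgn}) (F : {set T}).

Lemma oppvK : involutive (@oppv T).
Proof. by move=> X; apply/ffunP=> e; rewrite !ffunE; case: (X e). Qed.

Lemma supp_oppv X : supp (oppv X) = supp X.
Proof. by apply/setP=> e; rewrite !inE ffunE; case: (X e). Qed.

Lemma oppv_eq0 X e : (oppv X e == Sz) = (X e == Sz).
Proof. by rewrite ffunE; case: (X e). Qed.

Lemma zeroset_oppv X : zeroset (oppv X) = zeroset X.
Proof. by apply/setP=> e; rewrite !inE oppv_eq0. Qed.

Lemma zeroset_compv X Y : zeroset (compv X Y) = zeroset X :&: zeroset Y.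
Proof. by apply/setP=> e; rewrite !inE ffunE; case: (X e); case: (Y e). Qed.

Lemma nonzero_entry X : X != zerov T -> exists e, X e != Sz.
Proof.
move=> X0; apply/existsP; apply: contraNT X0 => /existsPn X0.
by apply/eqP/ffunP=> e; rewrite ffunE; apply/eqP/negbNE/X0.
Qed.

Lemma conformal_eq X Y e : conformal X Y -> X e != Sz -> Y e != Sz -> X e = Y e.
Proof.
move=> XY Xe Ye; have : e \notin sep X Y by rewrite XY inE.
by rewrite inE; move: Xe Ye; case: (X e); case: (Y e).
Qed.

Lemma between_suppU Z A B : (forall g, Z g != Sz -> Z g = A g \/ Z g = B g) ->
  supp Z \subset supp A :|: supp B.
Proof.
move=> ZAB; apply/subsetP=> g; rewrite !inE => Zg.
by case: (ZAB g Zg) => <-; rewrite Zg ?orbT.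
Qed.

Lemma suppU_zero Z A B h : supp Z \subset supp A :|: supp B -> A h = Sz -> B h = Sz -> Z h = Sz.
Proof.
move=> ZAB Ah Bh; apply/eqP; apply: contraT => Zh.
by have := subsetP ZAB h; rewrite !inE Ah Bh Zh => /(_ isT).
Qed.

Lemma suppU_zeroset Z A B F : supp Z \subset supp A :|: supp B ->
  F \subset zeroset A -> F \subset zeroset B -> F \subset zeroset Z.
Proof.
move=> ZAB FA FB; apply/subsetP=> h hF.
have := subsetP FA h hF; have := subsetP FB h hF; rewrite !inE => /eqP Bh /eqP Ah.
by rewrite (suppU_zero ZAB Ah Bh).
Qed.

End SignVectors.

Section OrientedMatroid.
Variable T : finType.
Variable C : {ffun T -> sgn} -> Prop.
Hypothesis omC : is_OM C.
Implicit Types (P Q R U V W X Y : {ffun T -> sgn}) (F : {set T}).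

Lemma cocircuit_oppv W : C W -> C (oppv W).
Proof. by case: omC => _ + _ _; apply. Qed.

Lemma cocircuit_supp_sub P Q : C P -> C Q -> supp P \subset supp Q -> P = Q \/ P = oppv Q.
Proof. by case: omC => _ _ + _; apply. Qed.

Lemma cocircuit_supp_eq P Q : C P -> C Q -> supp P \subset supp Q -> supp P = supp Q.
Proof. by move=> cP cQ /(cocircuit_supp_sub cP cQ) [] ->; rewrite ?supp_oppv. Qed.

Lemma cocircuit_elim P Q e : C P -> C Q -> P <> oppv Q -> e \in sep P Q ->
  exists Z, [/\ C Z, Z e = Sz & forall g, Z g != Sz -> Z g = P g \/ Z g = Q g].
Proof. by case: omC => _ _ _; apply. Qed.

Lemma weak_elim P Q x : C P -> C Q -> supp P != supp Q -> P x != Sz -> Q x != Sz ->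
  exists R, [/\ C R, R x = Sz & supp R \subset supp P :|: supp Q].
Proof.
move=> cP cQ PQ Px Qx.
suff elimQ Q' : C Q' -> supp Q' = supp Q -> x \in sep P Q' ->
    exists R, [/\ C R, R x = Sz & supp R \subset supp P :|: supp Q].
  have [xPQ|xPQ] := boolP (P x == sopp (Q x)).
    by apply: (elimQ Q) => //; rewrite inE xPQ Px.
  apply: elimQ (supp_oppv Q) _; first exact: cocircuit_oppv.
  by rewrite inE ffunE; move: Px Qx xPQ; case: (P x); case: (Q x).
move=> cQ' sQ' xPQ'.
have PQ' : P <> oppv Q' by move=> PE; rewrite PE supp_oppv sQ' eqxx in PQ.
have [R [cR Rx RPQ]] := cocircuit_elim cP cQ' PQ' xPQ'.
by exists R; rewrite -sQ'; split=> //; apply: between_suppU.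
Qed.

Lemma strong_elim P Q x y : C P -> C Q -> supp P != supp Q ->
  P x != Sz -> Q x != Sz -> P y != Sz -> Q y = Sz ->
  exists R, [/\ C R, R x = Sz, R y != Sz & supp R \subset supp P :|: supp Q].
Proof.
have [n] := ubnP #|supp P :|: supp Q|; elim: n P Q x y => // n IH P Q x y sizePQ.
move=> cP cQ PQ Px Qx Py Qy.
have [R [cR Rx RPQ]] := weak_elim cP cQ PQ Px Qx.
have [Ry|Ry] := eqVneq (R y) Sz; last by exists R.
have [g gR gP] : exists2 g, g \in supp R & g \notin supp P.
  apply/subsetPn/negP => RP; move/setP/(_ x): (cocircuit_supp_eq cR cP RP).
  by rewrite !inE Rx Px.
have Pg : P g = Sz by apply/eqP; rewrite inE negbK in gP.
have Qg : Q g != Sz by apply: contraTneq gR => Qg; rewrite inE (suppU_zero RPQ Pg Qg).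
have Rg : R g != Sz by rewrite inE in gR.
have QR_PQ : supp Q :|: supp R \subset supp P :|: supp Q by rewrite subUset subsetUr.
have QR_lt : #|supp Q :|: supp R| < n.
  apply: leq_trans (proper_card _) sizePQ; apply/properP; split=> //.
  by exists y; rewrite !inE ?Py // Qy Ry eqxx.
have QR : supp Q != supp R.
  by apply: contraNneq Qx => /setP/(_ x); rewrite !inE Rx eqxx => /negbFE.
have [R' [cR' R'g R'x R'QR]] := IH Q R g x QR_lt cQ cR QR Qg Rg Qx Rx.
have R'PQ : supp R' \subset supp P :|: supp Q := subset_trans R'QR QR_PQ.
have R'y : R' y = Sz := suppU_zero R'QR Qy Ry.
have PR'_lt : #|supp P :|: supp R'| < n.
  apply: leq_trans (proper_card _) sizePQ; apply/properP; split.
    by rewrite subUset subsetUl.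
  by exists g; rewrite !inE ?Qg ?orbT // Pg R'g eqxx.
have PR' : supp P != supp R'.
  by apply: contraNneq Py => /setP/(_ y); rewrite !inE R'y eqxx => /negbFE.
have [R'' [cR'' R''x R''y R''PR']] := IH P R' x y PR'_lt cP cR' PR' Px R'x Py R'y.
exists R''; split=> //; apply: subset_trans R''PR' _; by rewrite subUset subsetUl.
Qed.

Lemma edge_transversal F n : has_rank C setT n.+2 -> has_rank C F n ->
  exists2 A : {set T}, #|A| <= 2 &
    forall W, C W -> F \subset zeroset W -> exists2 a, a \in A & W a != Sz.
Proof.
move=> [_ rkT] [[J [JF [B baseB JB] cardJ]] _]; exists (B :\: J).
  have := rkT B (subsetT B) (ex_intro2 _ _ B baseB (subxx B)).
  by rewrite -(cardsID J B) (setIidPr JB) cardJ -addn2 leq_add2l.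
move=> W cW FW; have [e eB We] := baseB.1 W cW.
exists e => //; rewrite inE eB andbT; apply: contra We => eJ.
by have := subsetP FW e (subsetP JF e eJ); rewrite inE.
Qed.

Section Transversal.
Variables F A : {set T}.
Hypothesis A_small : #|A| <= 2.
Hypothesis A_meets : forall W, C W -> F \subset zeroset W -> exists2 a, a \in A & W a != Sz.

Lemma transversal_other a b c : a \in A -> b \in A -> c \in A -> a != b -> a != c -> b = c.
Proof.
move=> aA bA cA ab ac; apply/eqP/negP => /negP bc.
have : #|a |: [set b; c]| <= #|A|.
  by apply/subset_leq_card/subsetP => z; rewrite !inE => /or3P [] /eqP ->.
by rewrite cardsU1 cards2 !inE negb_or ab ac bc => /leq_trans/(_ A_small).
Qed.

Lemma transversal_supp_eq a W1 W2 : a \in A -> C W1 -> C W2 ->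
  F \subset zeroset W1 -> F \subset zeroset W2 -> W1 a = Sz -> W2 a = Sz ->
  supp W1 = supp W2.
Proof.
move=> aA c1 c2 F1 F2 a1 a2; apply/eqP; apply: contraT => W12.
have [b bA W1b] := A_meets c1 F1.
have [b' b'A W2b'] := A_meets c2 F2.
have ab : a != b by apply: contraNneq W1b => <-; rewrite a1.
have ab' : a != b' by apply: contraNneq W2b' => <-; rewrite a2.
have bb' := transversal_other aA bA b'A ab ab'; subst b'.
have [R [cR Rb RW]] := weak_elim c1 c2 W12 W1b W2b'.
have [c cA Rc] := A_meets cR (suppU_zeroset RW F1 F2).
have ac : a != c by apply: contraNneq Rc => <-; rewrite (suppU_zero RW a1 a2).
have bc : b != c by apply: contraNneq Rc => <-; rewrite Rb.
by rewrite (transversal_other aA bA cA ab ac) eqxx in bc.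
Qed.

Lemma transversal_zero P Q U g : C P -> C Q -> C U ->
  F \subset zeroset P -> F \subset zeroset Q -> F \subset zeroset U ->
  supp P != supp Q -> P g = Sz -> Q g = Sz -> U g = Sz.
Proof.
move=> cP cQ cU FP FQ FU PQ Pg Qg; apply/eqP; apply: contraT => Ug.
have [a aA Ua] := A_meets cU FU.
have [R [cR FR Ra Rg]] : exists R, [/\ C R, F \subset zeroset R, R a = Sz & R g = Sz].
  have [Pa|Pa] := eqVneq (P a) Sz; first by exists P.
  have [Qa|Qa] := eqVneq (Q a) Sz; first by exists Q.
  have [R [cR Ra RPQ]] := weak_elim cP cQ PQ Pa Qa.
  by exists R; split; [|exact: suppU_zeroset RPQ FP FQ | |exact: suppU_zero RPQ Pg Qg].
have [W [cW FW Wa Wg]] : exists W, [/\ C W, F \subset zeroset W, W a != Sz & W g = Sz].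
  have [Pa|Pa] := eqVneq (P a) Sz; last by exists P.
  have [Qa|Qa] := eqVneq (Q a) Sz; last by exists Q.
  by rewrite (transversal_supp_eq aA cP cQ FP FQ Pa Qa) eqxx in PQ.
have UW : supp U != supp W.
  by apply: contraNneq Ug => /setP/(_ g); rewrite !inE Wg eqxx => /negbFE.
have [D [cD Da Dg DUW]] := strong_elim cU cW UW Ua Wa Ug Wg.
have := transversal_supp_eq aA cR cD FR (suppU_zeroset DUW FU FW) Ra Da.
by move/setP/(_ g); rewrite !inE Rg (negbTE Dg).
Qed.

End Transversal.

Section Edge.
Variables (F : {set T}) (n : nat).
Hypotheses (rkT : has_rank C setT n.+2) (rkF : has_rank C F n).

(* Two distinct cocircuits through [F] and [g] force [g] into the closure of the flat [F]. *)
Lemma edge_cocircuit_zero P Q U g : C P -> C Q -> C U ->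
  F \subset zeroset P -> F \subset zeroset Q -> F \subset zeroset U ->
  supp P != supp Q -> P g = Sz -> Q g = Sz -> U g = Sz.
Proof.
have [A A_small A_meets] := edge_transversal rkT rkF.
exact: (transversal_zero A_small A_meets).
Qed.

Lemma edge_elim_value P Q V U h : C P -> C V -> C U ->
  F \subset zeroset P -> F \subset zeroset V -> F \subset zeroset U ->
  supp P != supp V -> (forall g, V g != Sz -> V g = P g \/ V g = Q g) ->
  P h = Sz -> U h != Sz -> V h = Q h.
Proof.
move=> cP cV cU FP FV FU PV VPQ Ph Uh.
have Vh : V h != Sz by apply: contra Uh => /eqP Vh; rewrite (edge_cocircuit_zero cP cV cU).
by case: (VPQ h Vh) => // VP; rewrite VP Ph eqxx in Vh.
Qed.

End Edge.

Lemma edge_elim_spec X Y e n : C X -> C Y -> conformal X Y -> X != Y ->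
  has_rank C setT n.+2 -> has_rank C (zeroset (compv X Y)) n ->
  X e = Y e -> X e != Sz -> elim_result C (oppv X) Y e (elim C (oppv X) Y e).
Proof.
move=> cX cY XY XneY rkT rkF XYe Xe; rewrite /elim; apply: epsilon_spec.
have FX : zeroset (compv X Y) \subset zeroset X by rewrite zeroset_compv subsetIl.
have FY : zeroset (compv X Y) \subset zeroset Y by rewrite zeroset_compv subsetIr.
have FoX : zeroset (compv X Y) \subset zeroset (oppv X) by rewrite zeroset_oppv.
have XY' : oppv X <> oppv Y by move/(inv_inj (@oppvK T))/eqP; rewrite (negbTE XneY).
have eXY : e \in sep (oppv X) Y by rewrite inE !ffunE -XYe eqxx andbT; case: (X e) Xe.
have [Z [cZ Ze ZXY]] := cocircuit_elim (cocircuit_oppv cX) cY XY' eXY.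
exists Z; split=> // h hXY.
have FZ := suppU_zeroset (between_suppU ZXY) FoX FY.
have XZ : supp (oppv X) != supp Z.
  by apply: contraNneq Xe => /setP/(_ e); rewrite !inE oppv_eq0 Ze eqxx => /negbFE.
have YZ : supp Y != supp Z.
  by apply: contraNneq Xe => /setP/(_ e); rewrite !inE XYe Ze eqxx => /negbFE.
rewrite ffunE oppv_eq0; have [Xh|Xh] := eqVneq (X h) Sz => /=.
  have [Yh|Yh] := eqVneq (Y h) Sz.
    by rewrite Yh (suppU_zero (between_suppU ZXY)) // ffunE Xh.
  apply: (edge_elim_value rkT rkF (cocircuit_oppv cX) cZ cY FoX FZ FY XZ ZXY) => //.
  by rewrite ffunE Xh.
have Yh : Y h = Sz.
  apply: contraTeq hXY => Yh; rewrite inE ffunE (conformal_eq XY Xh Yh).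
  by rewrite eqxx andbT; case: (Y h) Yh.
apply: (edge_elim_value (Q := oppv X) rkT rkF cY cZ cX FY FZ FX YZ _ Yh Xh).
by move=> g /ZXY [] ->; [right | left].
Qed.

End OrientedMatroid.

Lemma Dir_zero_right (T : finType) (C : {ffun T -> sgn} -> Prop) a b
    (X Y : {ffun T -> sgn}) :
  X a != Sz -> Y a = Sz -> Dir C a b X Y = Y b.
Proof. by rewrite /Dir => Xa ->; case: (X a) Xa. Qed.

Section SignIndex.
Variables (T : finType) (I : seq T) (x0 : T) (W : {ffun T -> sgn}).

Lemma sindex_nth_eq0 l : l.+1 < sindex I W -> W (nth x0 I l) = Sz.
Proof. by move=> /(before_find x0) /negbFE /eqP. Qed.

Lemma sindex_nth_neq0 k : sindex I W = k.+1 -> k < size I -> W (nth x0 I k) != Sz.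
Proof.
case=> Wk kI; rewrite -Wk in kI *; apply: (nth_find x0 (a := fun e => W e != Sz)).
by rewrite has_find.
Qed.

Lemma sindexP k : k < size I -> (forall l, l < k -> W (nth x0 I l) = Sz) ->
  W (nth x0 I k) != Sz -> sindex I W = k.+1.
Proof.
move=> kI Wl Wk; congr _.+1.
have [lt|gt|//] := ltngtP (find (fun e => W e != Sz) I) k.
  have hasW : has (fun e => W e != Sz) I by rewrite has_find (ltn_trans lt kI).
  by have := nth_find x0 hasW; rewrite Wl ?eqxx.
by have := before_find x0 gt; rewrite /= Wk.
Qed.

Lemma lex_sigma_sindex k : sindex I W = k.+1 -> k < size I -> lex_sigma I W = W (nth x0 I k).
Proof. by move=> Wk kI; rewrite /lex_sigma Wk kI (nth_map x0). Qed.

End SignIndex.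

Section SingleExtension.
Variables (E : finType) (C : {ffun E -> sgn} -> Prop).
Variables (C' : {ffun option E -> sgn} -> Prop) (sigma : {ffun E -> sgn} -> sgn).
Hypothesis ext : single_ext C C' sigma.
Implicit Types (W Z : {ffun option E -> sgn}).

Lemma single_ext_om : is_OM C'.
Proof. by case: ext. Qed.

Lemma restr_oppv W : restr (oppv W) = oppv (restr W).
Proof. by apply/ffunP=> e; rewrite !ffunE. Qed.

Lemma ext_restr_cocircuit W : C' W -> W None != Sz -> restr W != zerov E -> C (restr W).
Proof.
move=> cW Wp W0; have [omC' delC _] := ext.
apply/delC; split; [exact/eqP | by exists W |].
move=> W' cW' _ W'W.
have sub : supp W' \subset supp W.
  apply/subsetP => -[e|] eW'; last by rewrite inE.
  by move: eW'; have := subsetP (proper_sub W'W) e; rewrite !inE !ffunE.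
case: (cocircuit_supp_sub omC' cW' cW sub) => W'E.
  by rewrite W'E properxx in W'W.
by rewrite W'E restr_oppv supp_oppv properxx in W'W.
Qed.

Lemma ext_sigma_restr W : C' W -> W None != Sz -> restr W != zerov E ->
  W None = sigma (restr W).
Proof.
move=> cW Wp W0; have [omC' _ extC] := ext.
have cext := extC _ (ext_restr_cocircuit cW Wp W0).
have [e We] := nonzero_entry W0.
have sub : supp (extv (restr W) (sigma (restr W))) \subset supp W.
  by apply/subsetP => -[e'|]; rewrite !inE !ffunE.
case: (cocircuit_supp_sub omC' cext cW sub) => /ffunP; first by move/(_ None); rewrite ffunE.
by move/(_ (Some e)); move: We; rewrite !ffunE; case: (W (Some e)).
Qed.

(* Were [restr Z] a cocircuit of [C], its extension by [sigma] would be a cocircuit of [C']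
   with support strictly containing that of [Z]. *)
Lemma ext_proper_restr Z : C' Z -> Z None = Sz -> sigma (restr Z) != Sz ->
  exists2 W, C' W & supp (restr W) \proper supp (restr Z).
Proof.
move=> cZ Zp sZ; have [omC' delC extC] := ext; have [C'0 _ _ _] := omC'.
have Z0 : restr Z != zerov E.
  apply/eqP => Z0; apply: C'0; suff <- : Z = zerov (option E) by [].
  by apply/ffunP => -[e|]; rewrite ffunE //; move/ffunP/(_ e): Z0; rewrite !ffunE.
have nC : ~ C (restr Z).
  move=> cR; have cext := extC _ cR.
  have sub : supp Z \subset supp (extv (restr Z) (sigma (restr Z))).
    by apply/subsetP => -[e|]; rewrite !inE !ffunE ?Zp.
  case: (cocircuit_supp_sub omC' cZ cext sub) => /ffunP/(_ None);
    by rewrite !ffunE Zp; case: (sigma _) sZ.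
apply: NNPP => noW; apply/nC/delC; split; [exact/eqP | by exists Z |].
by move=> W cW _ WZ; apply: noW; exists W.
Qed.

End SingleExtension.

Lemma elim_result_zero (T : finType) (C : {ffun T -> sgn} -> Prop)
    (A B Z : {ffun T -> sgn}) e h :
  elim_result C A B e Z -> A h = Sz -> B h = Sz -> Z h = Sz.
Proof. by move=> [_ _ Zh] Ah Bh; rewrite Zh ?inE ?ffunE Ah ?Bh. Qed.

Section LexicographicEdge.
Variables (E : finType) (C : {ffun E -> sgn} -> Prop) (C' : {ffun option E -> sgn} -> Prop).
Variables (I : seq E) (x0 : E).
Hypothesis ext : single_ext C C' (lex_sigma I).

Lemma lex_new_entry W k : C' W -> W None != Sz ->
  sindex I (restr W) = k.+1 -> k < size I -> W None = W (Some (nth x0 I k)).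
Proof.
move=> cW Wp Wk kI; have Wk0 := sindex_nth_neq0 x0 Wk kI.
rewrite (ext_sigma_restr ext cW Wp) ?(lex_sigma_sindex x0 Wk kI) ?ffunE //.
by apply: contraNneq Wk0 => ->; rewrite ffunE.
Qed.

Variables (X Y : {ffun option E -> sgn}) (n k : nat) (f : E).
Hypotheses (cX : C' X) (cY : C' Y) (XY : conformal X Y).
Hypotheses (rkT : has_rank C' setT n.+2) (rkF : has_rank C' (zeroset (compv X Y)) n).
Hypotheses (XYp : X None = Y None) (Xp : X None != Sz).
Hypotheses (kI : k < size I) (Xk : sindex I (restr X) = k.+1).
Hypothesis Yk : forall l, l <= k -> Y (Some (nth x0 I l)) = Sz.

Local Notation ek := (Some (nth x0 I k)).
Local Notation F := (zeroset (compv X Y)).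
Local Notation Z := (elim C' (oppv X) Y None).
Let omC' := single_ext_om ext.

Let FX : F \subset zeroset X. Proof. by rewrite zeroset_compv subsetIl. Qed.
Let FY : F \subset zeroset Y. Proof. by rewrite zeroset_compv subsetIr. Qed.

Let X_prefix l : l < k -> X (Some (nth x0 I l)) = Sz.
Proof.
move=> lk; have lX : l.+1 < sindex I (restr X) by rewrite Xk.
by have := sindex_nth_eq0 x0 lX; rewrite ffunE.
Qed.

Let Xk_neq0 : X ek != Sz.
Proof. by have := sindex_nth_neq0 x0 Xk kI; rewrite ffunE. Qed.

Lemma elim_new_spec : elim_result C' (oppv X) Y None Z.
Proof.
apply: (edge_elim_spec omC' cX cY XY _ rkT rkF XYp Xp).
by apply: contraNneq Xk_neq0 => ->; rewrite Yk.
Qed.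

Let FZ : F \subset zeroset Z.
Proof.
apply/subsetP => h; rewrite zeroset_compv !inE => /andP [/eqP Xh /eqP Yh].
by apply/eqP; apply: elim_result_zero elim_new_spec _ Yh; rewrite ffunE Xh.
Qed.

Lemma elim_new_prefix l : l <= k -> Z (Some (nth x0 I l)) = sopp (X (Some (nth x0 I l))).
Proof.
move=> lk; have [_ _ -> //] := elim_new_spec; first by rewrite !ffunE Yk //; case: (X _).
by rewrite inE !ffunE Yk //; case: (X _).
Qed.

Lemma elim_new_sindex : sindex I (restr Z) = k.+1.
Proof.
apply: (sindexP (x0 := x0)) => // [l lk|]; rewrite ffunE elim_new_prefix //.
- by rewrite X_prefix.
- exact: ltnW.
- by case: (X ek) Xk_neq0.
Qed.

Lemma elim_new_f_neq0 : X (Some f) != Sz -> Z (Some f) != Sz.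
Proof.
move=> Xf; apply/eqP => Zf; have [cZ Zp _] := elim_new_spec.
have sZ : lex_sigma I (restr Z) != Sz.
  rewrite (lex_sigma_sindex x0 elim_new_sindex kI) ffunE elim_new_prefix //.
  by case: (X ek) Xk_neq0.
have [W cW WZ] := ext_proper_restr ext cZ Zp sZ.
have WZ0 e : Z (Some e) = Sz -> W (Some e) = Sz.
  move=> Ze; apply/eqP; apply: contraT => We.
  by have := subsetP (proper_sub WZ) e; rewrite !inE !ffunE Ze We => /(_ isT).
have FW : F \subset zeroset W.
  apply/subsetP => -[e|] hF; last by move: hF; rewrite zeroset_compv !inE (negbTE Xp).
  by rewrite inE WZ0 //; apply/eqP; move/subsetP: FZ => /(_ _ hF); rewrite inE.
have WZs : supp W != supp Z.
  move/properP: WZ => [_ [e eZ eW]]; apply: contraNneq eW => /setP/(_ (Some e)).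
  by rewrite !inE !ffunE => ->; rewrite inE ffunE in eZ.
have Xf0 := edge_cocircuit_zero omC' rkT rkF cW cZ cX FW FZ FX WZs (WZ0 _ Zf) Zf.
by rewrite Xf0 eqxx in Xf.
Qed.

Lemma elim_new_f_neq_opp : Y (Some f) != Sz -> Z (Some f) != sopp (Y (Some f)).
Proof.
move=> Yf; apply/eqP => ZYf; have [cZ Zp _] := elim_new_spec.
have YZ : Y <> oppv Z by move/ffunP/(_ None); rewrite ffunE Zp -XYp; case: (X None) Xp.
have fYZ : Some f \in sep Y Z by rewrite inE ZYf; case: (Y _) Yf.
have [V [cV Vf VYZ]] := cocircuit_elim omC' cY cZ YZ fYZ.
have FV := suppU_zeroset (between_suppU VYZ) FY FZ.
have YV : supp Y != supp V.
  by apply: contraNneq Yf => /setP/(_ (Some f)); rewrite !inE Vf eqxx => /negbFE.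
have ZV : supp Z != supp V.
  apply/eqP => /setP/(_ (Some f)); rewrite !inE Vf ZYf.
  by case: (Y _) Yf.
have Vk : V ek = Z ek.
  exact: (edge_elim_value omC' rkT rkF cY cV cX FY FV FX YV VYZ (Yk (leqnn k)) Xk_neq0).
have Vp : V None = Y None.
  apply: (edge_elim_value (Q := Y) omC' rkT rkF cZ cV cX FZ FV FX ZV _ Zp Xp).
  by move=> g /VYZ [] ->; [right | left].
have V_prefix l : l < k -> V (Some (nth x0 I l)) = Sz.
  move=> lk; apply: suppU_zero (between_suppU VYZ) (Yk (ltnW lk)) _.
  by rewrite elim_new_prefix ?X_prefix ?(ltnW lk).
have Vsindex : sindex I (restr V) = k.+1.
  apply: (sindexP (x0 := x0)) => // [l lk|]; rewrite ffunE; first exact: V_prefix.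
  by rewrite Vk elim_new_prefix //; case: (X ek) Xk_neq0.
have Vp_neq0 : V None != Sz by rewrite Vp -XYp.
have := lex_new_entry cV Vp_neq0 Vsindex kI.
rewrite Vp -XYp (lex_new_entry cX Xp Xk kI) Vk elim_new_prefix //.
by case: (X ek) Xk_neq0.
Qed.

Lemma lex_Dir_new : Y (Some f) != Sz -> Dir C' None (Some f) X Y = Y (Some f).
Proof.
move=> Yf; rewrite /Dir Xp -XYp eqxx /=; have [_ _ Zh] := elim_new_spec.
have [Xf|Xf] := eqVneq (X (Some f)) Sz; first by rewrite Zh ?inE !ffunE Xf.
have := elim_new_f_neq0 Xf; have := elim_new_f_neq_opp Yf.
by case: (Z _); case: (Y _) Yf.
Qed.

End LexicographicEdge.

Theorem lemma3p6 (E : finType) (C : {ffun E -> sgn} -> Prop) (r : nat)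
    (f : E) (I : seq E) (C' : {ffun option E -> sgn} -> Prop)
    (X Y : {ffun option E -> sgn}) (i j : nat) :
  is_OM C -> has_rank C setT r ->
  uniq I -> indep C [set e in I] -> size I <= r ->
  single_ext C C' (lex_sigma I) ->
  C' X -> C' Y -> conformal X Y ->
  X None = Y None -> X None != Sz ->
  is_edge C' (compv X Y) ->
  Y (Some f) != Sz ->
  sindex I (restr X) = i -> sindex I (restr Y) = j ->
  1 <= i -> i < j -> j <= size I ->
  Dir C' None (Some f) X Y = Y (Some f) /\
  Dir C' (Some (nth f I i.-1)) (Some f) X Y = Y (Some f).
Proof.
move=> _ _ _ _ _ ext cX cY XY XYp Xp [_ [n [rkT rkF]]] Yf Xi Yj i_gt0 ij jI.
have Xk : sindex I (restr X) = i.-1.+1 by rewrite prednK.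
have kI : i.-1 < size I by rewrite prednK // ltnW // (leq_trans ij jI).
have Yk l : l <= i.-1 -> Y (Some (nth f I l)) = Sz.
  move=> li; have lY : l.+1 < sindex I (restr Y).
    by rewrite Yj (leq_ltn_trans _ ij) // -(prednK i_gt0).
  by have := sindex_nth_eq0 f lY; rewrite ffunE.
split; first exact: (lex_Dir_new ext cX cY XY rkT rkF XYp Xp kI Xk Yk Yf).
apply: Dir_zero_right; last exact: Yk.
by have := sindex_nth_neq0 f Xk kI; rewrite ffunE.
Qed.
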